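(* Let $A$ be an invertible $n\times n$ real matrix, $b\in\mathbb{R}^n$, and let $x^*=A^{-1}b$ with $i$-th component $x^*_i$. Let $Q=A^TA$, $w=A^Tb$, let $q_j$ denote the $j$-th column of $Q$, let $q_{\min}=\min\{\Vert q_j\Vert : j=1,\dots,n\}$, and let $\lambda_{\min}$ be the minimum eigenvalue of $Q$. Set $$\tau_*=\Big(\prod_{j=1}^n \Vert q_j\Vert\Big)\frac{\Vert w\Vert}{q_{\min}\,\lambda_{\min}^n},\qquad \tau'_*=\Big(\prod_{j=1}^n \Vert q_j\Vert\Big)\frac{\Vert w\Vert}{q_{\min}\,\det(Q)}.$$ Then for every $i=1,\dots,n$, $$x^*_i\geq -\tau'_*\geq -\tau_*.$$ In particular $\tau_*\geq\tau'_*\geq t_*$, where $$t_*=\min\big\{t : \text{there exists } x\in\mathbb{R}^n \text{ with } x\geq 0 \text{ and } A(x-te)=b\big\}$$ and $e=(1,\dots,1)^T\in\mathbb{R}^n$.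
   Context: $\Vert\cdot\Vert$ denotes the Euclidean norm. Inequalities between vectors ($x\geq 0$) are componentwise. *)

From HB Require Import structures.
From mathcomp Require Import all_boot all_order all_algebra.
Set Implicit Arguments. Unset Strict Implicit. Unset Printing Implicit Defensive.
Import Order.TTheory GRing.Theory Num.Theory.
Local Open Scope ring_scope.

Definition enorm (R : rcfType) (n : nat) (v : 'cV[R]_n) : R :=
  Num.sqrt (\sum_(i < n) v i 0 ^+ 2).

Definition ones (R : rcfType) (n : nat) : 'cV[R]_n := const_mx 1.

Definition feasible (R : rcfType) (n : nat) (A : 'M[R]_n) (b : 'cV[R]_n) (t : R) : Prop :=
  exists x : 'cV[R]_n, (forall i, 0 <= x i 0) /\ A *m (x - t *: ones R n) = b.

(** Then [Q x* = w], so by Cramer's rule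
    [det Q * x*_i] is the determinant of [Q] with its [i]-th column replaced
    by [w]; Hadamard's inequality bounds it by [||w|| * prod_(j <> i) ||q_j||
    <= ||w|| * prod_j ||q_j|| / q_min].  Hence [|x*_i| <= tau'].  Since [Q] is
    a Gram matrix, its eigenvalues are nonnegative and [det Q] is their
    product, so [det Q >= lambda_min^n] and [tau' <= tau].  Finally
    [x* + tau' e >= 0] witnesses that [tau'] is feasible, so the least
    feasible [t] is at most [tau'].  Hadamard's inequality itself follows from
    AM-GM applied to the eigenvalues of the Gram matrix of the matrix with
    normalised columns, whose trace is [n]. *)
From HB Require Import structures.
From mathcomp Require Import all_boot all_order all_algebra.
From mathcomp Require Import ring.
From mathcomp.real_closed Require Import complex.
Import Order.TTheory GRing.Theory Num.Theory.
Local Open Scope ring_scope.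

Set Implicit Arguments.
Unset Strict Implicit.
Unset Printing Implicit Defensive.

Section GramSpectrum.
Variable R : rcfType.
Local Notation C := (R[i]).
Local Notation toC := (real_complex R).

Definition hnorm2 m (v : 'rV[C]_m) : C := (v *m (map_mx conjc v)^T) 0 0.

Lemma hnorm2E m (v : 'rV[C]_m) : hnorm2 v = \sum_i v 0 i * conjc (v 0 i).
Proof. by rewrite /hnorm2 mxE; apply: eq_bigr => i _; rewrite !mxE. Qed.

Lemma hnorm2_ge0 m (v : 'rV[C]_m) : 0 <= hnorm2 v.
Proof. by rewrite hnorm2E; apply: sumr_ge0 => i _; apply: mulcJ_ge0. Qed.

Lemma hnorm2_gt0 m (v : 'rV[C]_m) : v != 0 -> 0 < hnorm2 v.
Proof.
move=> v_neq0; rewrite lt_def hnorm2_ge0 andbT; apply: contra v_neq0.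
rewrite hnorm2E psumr_eq0 => [/allP vv0|i _]; last exact: mulcJ_ge0.
apply/eqP/rowP => i; rewrite mxE.
by have := vv0 i (mem_index_enum _); rewrite /= mulf_eq0 conjc_eq0 orbb => /eqP.
Qed.

(* If [v G = z v] with [G = M^T M] then [z |v|^2 = v G v^* = |v M^T|^2]. *)
Lemma gram_eigenvalueC_ge0 m n (M : 'M[R]_(m, n)) (z : C) :
  eigenvalue (map_mx toC (M^T *m M)) z -> 0 <= z.
Proof.
case/eigenvalueP => v vG v_neq0.
set MC := map_mx toC M; set u := v *m MC^T.
have quad : v *m map_mx toC (M^T *m M) *m (map_mx conjc v)^T
            = u *m (map_mx conjc u)^T.
  rewrite map_mxM map_trmx /u map_mxM trmx_mul map_trmx !mulmxA.
  congr (_ *m _ *m _); apply/matrixP => i j; rewrite !mxE //.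
  exact: (esym (conjc_real _)).
move: quad; rewrite vG -scalemxAl => /matrixP /(_ 0 0); rewrite mxE => zv.
have v_gt0 := hnorm2_gt0 v_neq0.
have -> : z = hnorm2 u / hnorm2 v by rewrite -[hnorm2 u]zv mulfK ?gt_eqF.
by rewrite divr_ge0 ?hnorm2_ge0 ?ltW.
Qed.

Lemma gram_eigenvalue_ge0 m n (M : 'M[R]_(m, n)) l :
  eigenvalue (M^T *m M) l -> 0 <= l.
Proof.
by rewrite -(eigenvalue_map toC) -ler0c => /gram_eigenvalueC_ge0.
Qed.

Lemma gram_char_poly_split n (M : 'M[R]_n) : exists2 r : seq R,
  size r = n & char_poly (M^T *m M) = \prod_(x <- r) ('X - x%:P).
Proof.
set G := M^T *m M.
have [rC GrC] := closed_field_poly_normal (char_poly (map_mx toC G)).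
rewrite (monicP (char_poly_monic _)) scale1r in GrC.
have rC_real z : z \in rC -> toC (complex.Re z) = z.
  move=> z_rC; apply/RRe_real/ger0_real/(gram_eigenvalueC_ge0 (M := M)).
  by rewrite eigenvalue_root_char GrC root_prod_XsubC.
exists (map (@complex.Re R) rC).
  have := size_char_poly G; rewrite -(size_map_poly toC) map_char_poly GrC.
  by rewrite size_prod_XsubC size_map => -[].
apply: (@map_poly_inj _ _ toC).
rewrite map_char_poly GrC rmorph_prod big_map; apply: eq_big_seq => z z_rC /=.
by rewrite map_polyXsubC /= rC_real.
Qed.

End GramSpectrum.

Section CharPolySplit.
Variables (F : fieldType) (n : nat) (A : 'M[F]_n) (r : seq F).
Hypothesis A_split : char_poly A = \prod_(x <- r) ('X - x%:P).

Lemma size_char_poly_split : size r = n.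
Proof.
by have := size_char_poly A; rewrite A_split size_prod_XsubC => -[].
Qed.

Lemma det_char_poly_split : \det A = \prod_(x <- r) x.
Proof.
have := char_poly_det A; rewrite A_split coef0_prod_XsubC size_char_poly_split.
by move/mulfI => -> //; rewrite signr_eq0.
Qed.

Lemma trace_char_poly_split : \tr A = \sum_(x <- r) x.
Proof.
case: r A_split size_char_poly_split => [|x0 r'] splitA size_r.
  rewrite big_nil /mxtrace big1 // => i _.
  by have := ltn_ord i; rewrite -[X in (_ < X)%N]size_r.
have n_gt0 : (0 < n)%N by rewrite -size_r.
have := char_poly_trace A n_gt0.
by rewrite splitA -[X in _`_X.-1]size_r coefPn_prod_XsubC // => /oppr_inj.
Qed.

Lemma eigenvalue_char_poly_split x : eigenvalue A x = (x \in r).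
Proof. by rewrite eigenvalue_root_char A_split root_prod_XsubC. Qed.

End CharPolySplit.

Lemma eigenvalue0_det (F : fieldType) n (A : 'M[F]_n) :
  eigenvalue A 0 = (\det A == 0).
Proof.
by rewrite eigenvalue_root_char /root horner_coef0 char_poly_det mulf_eq0 signr_eq0.
Qed.

Lemma prodr_le_AGM (F : realFieldType) (r : seq F) : all (fun x => 0 <= x) r ->
  \prod_(x <- r) x <= ((\sum_(x <- r) x) / (size r)%:R) ^+ size r.
Proof.
move=> /allP r_ge0.
have [AGM _] := @leif_AGM F 'I_(size r) predT (fun i => r`_i)
  (fun i _ => r_ge0 _ (mem_nth 0 (ltn_ord i))).
have prodE : \prod_(i in @predT 'I_(size r)) r`_i = \prod_(x <- r) x.
  by rewrite (big_nth 0) big_mkord.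
have sumE : \sum_(i in @predT 'I_(size r)) r`_i = \sum_(x <- r) x.
  by rewrite (big_nth 0) big_mkord.
by rewrite /= card_ord prodE sumE in AGM.
Qed.

Section Hadamard.
Variable R : rcfType.

Lemma enorm_ge0 n (v : 'cV[R]_n) : 0 <= enorm v.
Proof. exact: sqrtr_ge0. Qed.

Lemma enorm_sq n (v : 'cV[R]_n) : enorm v ^+ 2 = \sum_i v i 0 ^+ 2.
Proof. by rewrite sqr_sqrtr // sumr_ge0 // => i _; exact: sqr_ge0. Qed.

Lemma enorm_scale n (a : R) (v : 'cV[R]_n) : enorm (a *: v) = `|a| * enorm v.
Proof.
rewrite /enorm; under eq_bigr do rewrite mxE exprMn.
by rewrite -mulr_sumr sqrtrM ?sqr_ge0 // sqrtr_sqr.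
Qed.

Lemma enorm_col_gt0 n (M : 'M[R]_n) j : \det M != 0 -> 0 < enorm (col j M).
Proof.
move=> detM_neq0; rewrite lt_def enorm_ge0 andbT; apply: contra detM_neq0.
rewrite -sqrf_eq0 enorm_sq psumr_eq0 => [/allP col_eq0|i _]; last exact: sqr_ge0.
rewrite (expand_det_col M j) big1 // => i _.
by have := col_eq0 i (mem_index_enum _); rewrite /= sqrf_eq0 mxE => /eqP ->; rewrite mul0r.
Qed.

Lemma gram_diag m n (M : 'M[R]_(m, n)) j : (M^T *m M) j j = enorm (col j M) ^+ 2.
Proof. by rewrite enorm_sq mxE; apply: eq_bigr => i _; rewrite !mxE expr2. Qed.

Lemma col_mul_diag n (M : 'M[R]_n) (d : 'rV[R]_n) j :
  col j (M *m diag_mx d) = d 0 j *: col j M.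
Proof. by apply/colP => i; rewrite mul_mx_diag !mxE mulrC. Qed.

(* The Gram matrix of [N] has trace [n] and its eigenvalues are nonnegative
   with product [det N ^ 2], so AM-GM gives [det N ^ 2 <= 1]. *)
Lemma normr_det_le1 n (N : 'M[R]_n) :
  (forall j, enorm (col j N) = 1) -> `|\det N| <= 1.
Proof.
move=> col_norm1; have [r size_r splitG] := gram_char_poly_split N.
have r_ge0 : all (fun x => 0 <= x) r.
  apply/allP => x; rewrite -(eigenvalue_char_poly_split splitG).
  exact: gram_eigenvalue_ge0.
have trG : \sum_(x <- r) x = n%:R.
  rewrite -(trace_char_poly_split splitG) /mxtrace.
  by under eq_bigr do rewrite gram_diag col_norm1 expr1n; rewrite sumr_const card_ord.
have := prodr_le_AGM r_ge0; rewrite -(det_char_poly_split splitG) trG size_r.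
have -> : (n%:R / n%:R) ^+ n = 1 :> R.
  by case: n {N col_norm1 size_r splitG trG} => [|k];
    rewrite ?expr0 // divff ?pnatr_eq0 ?expr1n.
rewrite det_mulmx det_tr -expr2 -real_normK ?num_real //.
by rewrite expr_le1 ?normr_ge0.
Qed.

Lemma hadamard n (M : 'M[R]_n) : `|\det M| <= \prod_j enorm (col j M).
Proof.
have [->|detM_neq0] := eqVneq (\det M) 0.
  by rewrite normr0 prodr_ge0 // => j _; exact: enorm_ge0.
have col_gt0 j := enorm_col_gt0 j detM_neq0.
pose d := \row_j (enorm (col j M))^-1.
have d_norm j : `|d 0 j| = (enorm (col j M))^-1.
  by rewrite mxE normfV gtr0_norm.
have : `|\det (M *m diag_mx d)| <= 1.
  apply: normr_det_le1 => j.
  by rewrite col_mul_diag enorm_scale d_norm mulVf ?gt_eqF.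
rewrite det_mulmx det_diag normrM normr_prod (eq_bigr _ (fun j _ => d_norm j)).
by rewrite prodfV ler_pdivrMr ?mul1r // prodr_gt0.
Qed.

End Hadamard.

Definition col_subst (F : Type) n (Q : 'M[F]_n) i (w : 'cV[F]_n) : 'M[F]_n :=
  \matrix_(k, j) if j == i then w k 0 else Q k j.

Lemma col_col_subst (F : Type) n (Q : 'M[F]_n) i w j :
  col j (col_subst Q i w) = if j == i then w else col j Q.
Proof. by apply/colP => k; rewrite !mxE; case: eqP; rewrite ?mxE. Qed.

(* [col_subst Q i (Q x)] is [Q] times the identity with its [i]-th column
   replaced by [x], whose determinant is [x i 0]. *)
Lemma cramer_rule (F : comNzRingType) n (Q : 'M[F]_n) (x w : 'cV[F]_n) i :
  Q *m x = w -> \det (col_subst Q i w) = \det Q * x i 0.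
Proof.
move=> Qx; set E := col_subst 1%:M i x.
have -> : col_subst Q i w = Q *m E.
  apply/matrixP => k j; rewrite !mxE; case: eqP => [->|/eqP ji].
    by rewrite -Qx mxE; apply: eq_bigr => l _; rewrite !mxE eqxx.
  by rewrite -{1}(mulmx1 Q) mxE; apply: eq_bigr => l _; rewrite !mxE (negbTE ji).
rewrite det_mulmx (expand_det_row E i) (bigD1 i) //= big1 ?addr0; last first.
  by move=> j ji; rewrite !mxE (negbTE ji) eq_sym (negbTE ji) mul0r.
rewrite /cofactor (_ : row' i (col' i E) = 1%:M); last first.
  by apply/matrixP => k l; rewrite !mxE lift_eqF (inj_eq (@lift_inj _ i)).
by rewrite !mxE eqxx det1 mulr1 -signr_odd addnn odd_double mulr1.
Qed.

Section SolutionBound.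
Variable R : rcfType.

Lemma normr_solution_le n (Q : 'M[R]_n) (x w : 'cV[R]_n) (q : R) i :
  0 < \det Q -> 0 < q -> q <= enorm (col i Q) -> Q *m x = w ->
  `|x i 0| <= (\prod_j enorm (col j Q)) * enorm w / (q * \det Q).
Proof.
move=> detQ_gt0 q_gt0 q_le Qx; have := hadamard (col_subst Q i w).
have other_cols : \prod_(j | j != i) enorm (col j (col_subst Q i w))
                  = \prod_(j | j != i) enorm (col j Q).
  by apply: eq_bigr => j ji; rewrite col_col_subst (negbTE ji).
rewrite (cramer_rule i Qx) (bigD1 i) //= col_col_subst eqxx other_cols.
rewrite normrM (gtr0_norm detQ_gt0) => bound.
rewrite ler_pdivlMr ?mulr_gt0 // (bigD1 i) //= -mulrA [_ * enorm w]mulrC.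
have -> : `|x i 0| * (q * \det Q) = q * (\det Q * `|x i 0|) by ring.
by apply: ler_pM; rewrite ?(ltW q_gt0) ?mulr_ge0 ?normr_ge0 ?(ltW detQ_gt0).
Qed.

Lemma expn_min_gram_eigenvalue_le_det n (M : 'M[R]_n) l :
  eigenvalue (M^T *m M) l -> (forall mu, eigenvalue (M^T *m M) mu -> l <= mu) ->
  l ^+ n <= \det (M^T *m M).
Proof.
move=> l_eig l_min; have [r size_r splitG] := gram_char_poly_split M.
have -> : l ^+ n = \prod_(x <- r) l.
  by rewrite big_const_seq count_predT iter_mulr_1 size_r.
rewrite (det_char_poly_split splitG) !big_seq; apply: ler_prod => x x_r.
by rewrite (gram_eigenvalue_ge0 l_eig) l_min // (eigenvalue_char_poly_split splitG).
Qed.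

End SolutionBound.

Theorem theorem7 (R : rcfType) (n : nat) (A : 'M[R]_n) (b : 'cV[R]_n)
  (qmin lmin : R) :
  A \in unitmx ->
  (exists j : 'I_n, qmin = enorm (col j (A^T *m A))) ->
  (forall j : 'I_n, qmin <= enorm (col j (A^T *m A))) ->
  eigenvalue (A^T *m A) lmin ->
  (forall mu, eigenvalue (A^T *m A) mu -> lmin <= mu) ->
  let Q := A^T *m A in
  let w := A^T *m b in
  let xs := invmx A *m b in
  let P := \prod_(j < n) enorm (col j Q) in
  let tau := P * enorm w / (qmin * lmin ^+ n) in
  let tau' := P * enorm w / (qmin * \det Q) in
  (forall i : 'I_n, - tau' <= xs i 0 /\ - tau <= - tau') /\
  (tau' <= tau /\
   forall ts : R, feasible A b ts -> (forall t, feasible A b t -> ts <= t) ->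
     ts <= tau').
Proof.
move=> A_unit [i0 qmin_def] qmin_le lmin_eig lmin_min Q w xs P tau tau'.
have detQ_gt0 : 0 < \det Q.
  by rewrite det_mulmx det_tr -expr2 exprn_even_gt0 //= -unitfE -unitmxE.
have qmin_gt0 : 0 < qmin by rewrite qmin_def enorm_col_gt0 ?gt_eqF.
have P_ge0 : 0 <= P by rewrite prodr_ge0 // => j _; rewrite enorm_ge0.
have Qxs : Q *m xs = w by rewrite mulmxA -[A^T *m A *m _]mulmxA mulmxV // mulmx1.
have xs_bound i : `|xs i 0| <= tau'.
  exact: normr_solution_le detQ_gt0 qmin_gt0 (qmin_le i) Qxs.
have lmin_gt0 : 0 < lmin.
  rewrite lt_def (gram_eigenvalue_ge0 lmin_eig) andbT.
  by apply: contraTneq lmin_eig => ->; rewrite eigenvalue0_det gt_eqF.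
have tau'_le_tau : tau' <= tau.
  apply: ler_wpM2l; first by rewrite mulr_ge0 ?enorm_ge0.
  rewrite lef_pV2 ?posrE ?mulr_gt0 ?exprn_gt0 //.
  by apply: ler_wpM2l; [exact: ltW | exact: expn_min_gram_eigenvalue_le_det].
split=> [i|]; first by have := xs_bound i; rewrite ler_norml lerN2 => /andP[-> _].
split=> // ts _ ts_min; apply: ts_min.
exists (xs + tau' *: ones R n); split; last by rewrite addrK mulKVmx.
move=> i; have := xs_bound i; rewrite ler_norml => /andP[xs_ge _].
have -> : (xs + tau' *: ones R n) i 0 = xs i 0 + tau' by rewrite !mxE mulr1.
by rewrite -lerBlDr sub0r.
Qed.
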